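(* Let $k\in\mathbb{N}$, $G=(g_1,\dots,g_k)\in\mathbb{N}_0^k$ with $g_1>0$, $g\in\langle G\rangle$, and $m\in\mathbb{N}$ with $\gcd(g,m)=1$. Then $G$ is telescopic if and only if $\tau_{g,m}(G)$ is telescopic.
   Context: $\langle G\rangle$ is the set of $\mathbb{N}_0$-linear combinations of the entries of $G$. $G_i=(g_1,\dots,g_i)$, $d_i=\gcd(G_i)$, $c_j=d_{j-1}/d_j$; $G$ is telescopic if $c_jg_j\in\langle G_{j-1}\rangle$ for $2\le j\le k$. For $g\in\langle G\rangle$ and $m\in\mathbb{N}$ with $\gcd(m,g)=1$, $\tau_{g,m}(G)=(mg_1,\dots,mg_k,g)\in\mathbb{N}_0^{k+1}$. *)

From mathcomp Require Import all_boot.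
Set Implicit Arguments. Unset Strict Implicit. Unset Printing Implicit Defensive.

(* A finite sequence G = (g_1,...,g_k) of naturals is a [seq nat]; g_i is
   [nth 0 G (i-1)] (1-based indices of the paper shifted to 0-based). *)

Definition inSG (G : seq nat) (x : nat) : Prop :=
  exists a : nat -> nat, x = \sum_(i < size G) a i * nth 0 G i.

Definition Gpre (G : seq nat) (i : nat) : seq nat := take i G.

Definition dG (G : seq nat) (i : nat) : nat := foldr gcdn 0 (Gpre G i).

Definition cG (G : seq nat) (j : nat) : nat := dG G j.-1 %/ dG G j.

Definition telescopic (G : seq nat) : Prop :=
  forall j : nat, 2 <= j <= size G ->
    inSG (Gpre G j.-1) (cG G j * nth 0 G j.-1).

Definition tau (g m : nat) (G : seq nat) : seq nat :=
  rcons (map (fun x => m * x) G) g.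

From mathcomp Require Import all_boot.

(* Scaling G by m scales every d_j by m, so tau leaves c_1, ..., c_k unchanged
   and, after cancelling the common factor m, the first k telescopic conditions
   of tau(G) are those of G.  The new gcd is d_(k+1) = gcd (m d_k, g) = d_k
   because d_k divides g and g is coprime to m; hence c_(k+1) = m, and the last
   condition m g \in <m G> is just g \in <G>. *)

Lemma foldr_gcdn_map_mul m s :
  foldr gcdn 0 (map (fun x => m * x) s) = m * foldr gcdn 0 s.
Proof. by elim: s => [|a s IHs] /=; rewrite ?muln0 // IHs muln_gcdr. Qed.

Lemma foldr_gcdn_seed s z : foldr gcdn z s = gcdn (foldr gcdn 0 s) z.
Proof. by elim: s => [|a s IHs] /=; rewrite ?gcd0n // IHs gcdnA. Qed.

Lemma foldr_gcdn_dvd_nth s i : foldr gcdn 0 s %| nth 0 s i.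
Proof.
elim: s i => [|a s IHs] [|i] /=; rewrite ?dvdn0 ?dvdn_gcdl //.
exact: dvdn_trans (dvdn_gcdr _ _) (IHs i).
Qed.

Lemma inSG_gcd_dvd s x : inSG s x -> foldr gcdn 0 s %| x.
Proof. by move=> [a ->]; apply: dvdn_sum => i _; rewrite dvdn_mull ?foldr_gcdn_dvd_nth. Qed.

Lemma inSG_map_mul m s x :
  0 < m -> inSG (map (fun y => m * y) s) (m * x) <-> inSG s x.
Proof.
move=> m_gt0; rewrite /inSG size_map.
have scale a : \sum_(i < size s) a i * nth 0 (map (fun y => m * y) s) i
             = m * \sum_(i < size s) a i * nth 0 s i.
  by rewrite big_distrr; apply: eq_bigr => i _; rewrite (nth_map 0) // mulnCA.
split=> -[a def_x]; exists a; last by rewrite def_x scale.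
by apply/eqP; rewrite -(eqn_pmul2l m_gt0) def_x scale.
Qed.

Lemma dG_gt0 G j : 0 < nth 0 G 0 -> 0 < j -> 0 < dG G j.
Proof. by case: G j => [|a G] [|j] //= a_gt0; rewrite /dG /Gpre /= gcdn_gt0 a_gt0. Qed.

Lemma dG_size G : dG G (size G) = foldr gcdn 0 G.
Proof. by rewrite /dG /Gpre take_size. Qed.

Section Tau.

Variables (G : seq nat) (g m : nat).
Hypothesis m_gt0 : 0 < m.

Local Notation tG := (tau g m G).

Lemma size_tau : size tG = (size G).+1.
Proof. by rewrite /tau size_rcons size_map. Qed.

Lemma Gpre_tau j : j <= size G -> Gpre tG j = map (fun x => m * x) (Gpre G j).
Proof. by move=> le_jG; rewrite /Gpre /tau -cats1 takel_cat ?size_map // map_take. Qed.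

Lemma dG_tau j : j <= size G -> dG tG j = m * dG G j.
Proof. by move=> le_jG; rewrite /dG Gpre_tau // foldr_gcdn_map_mul. Qed.

Lemma nth_tau_lt j : j < size G -> nth 0 tG j = m * nth 0 G j.
Proof. by move=> lt_jG; rewrite /tau nth_rcons size_map lt_jG (nth_map 0). Qed.

Lemma nth_tau_size : nth 0 tG (size G) = g.
Proof. by rewrite /tau nth_rcons size_map ltnn eqxx. Qed.

Lemma telescopic_step_tau j : 0 < j <= size G ->
  inSG (Gpre tG j.-1) (cG tG j * nth 0 tG j.-1) <->
  inSG (Gpre G j.-1) (cG G j * nth 0 G j.-1).
Proof.
case: j => // j /= lt_jG.
have le_jG := ltnW lt_jG.
rewrite /cG /= Gpre_tau // !dG_tau // divnMl // nth_tau_lt //.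
by rewrite mulnCA; apply: inSG_map_mul.
Qed.

Hypotheses (G0_gt0 : 0 < nth 0 G 0) (g_in : inSG G g) (coprime_gm : coprime g m).

Lemma cG_tau_last : cG tG (size G).+1 = m.
Proof.
have d_dvd_g : foldr gcdn 0 G %| g by apply: inSG_gcd_dvd.
have d_gt0 : 0 < foldr gcdn 0 G by rewrite -dG_size dG_gt0 //; case: (G) G0_gt0.
have dG_tau_last : dG tG (size G).+1 = gcdn (m * foldr gcdn 0 G) g.
  rewrite /dG /Gpre take_oversize ?size_tau // /tau -cats1 foldr_cat /= gcdn0.
  by rewrite foldr_gcdn_seed foldr_gcdn_map_mul.
rewrite /cG /= dG_tau_last dG_tau // dG_size gcdnC Gauss_gcdr //.
by rewrite (gcdn_idPr d_dvd_g) mulnK.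
Qed.

Lemma telescopic_tau_last :
  inSG (Gpre tG (size G)) (cG tG (size G).+1 * nth 0 tG (size G)).
Proof.
by rewrite cG_tau_last nth_tau_size Gpre_tau // /Gpre take_size; apply/inSG_map_mul.
Qed.

Lemma telescopic_tau : telescopic tG <-> telescopic G.
Proof.
split=> tel j /andP[j_ge2 j_le].
- apply/telescopic_step_tau; first by rewrite (ltnW j_ge2).
  by apply: tel; rewrite j_ge2 size_tau (leq_trans j_le).
- rewrite size_tau leq_eqVlt in j_le; case/orP: j_le => [/eqP-> | lt_jG].
    exact: telescopic_tau_last.
  apply/telescopic_step_tau; first by rewrite (ltnW j_ge2).
  by apply: tel; rewrite j_ge2.
Qed.

End Tau.

Theorem mainTheorem12 (k : nat) (G : seq nat) (g m : nat) :
  0 < k -> size G = k -> 0 < nth 0 G 0 ->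
  inSG G g -> 0 < m -> coprime g m ->
  (telescopic G <-> telescopic (tau g m G)).
Proof.
move=> _ _ G0_gt0 g_in m_gt0 coprime_gm.
apply: iff_sym; exact: telescopic_tau.
Qed.
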